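(* Let $p$ be a positive stochastic choice function on a finite set $X$ satisfying: for any $A\in\mathscr{A}$, $a,b\in A$ and $x\notin A$ with $a\sim_p x$ and $b\sim_p x$, one has $\frac{p(a,A)}{p(b,A)}=\frac{p(a,A\cup x)}{p(b,A\cup x)}$. Then the relation $\sim_p$ is transitive (hence, being reflexive and symmetric, an equivalence relation on $X$).
   Context: $X$ is a finite set and $\mathscr{A}$ the collection of nonempty subsets of $X$. A stochastic choice function is $p:X\times\mathscr{A}\to[0,1]$ with $\sum_{a\in A}p(a,A)=1$ and $p(x,A)=0$ for $x\notin A$; $p$ is positive: $p(a,A)>0$ for $a\in A$. $A\cup x$ denotes $A\cup\{x\}$. $a\sim_p b$ means: $\frac{p(a,A)}{p(b,A)}=\frac{p(a,\{a,b\})}{p(b,\{a,b\})}$ for every $A\in\mathscr{A}$ with $a,b\in A$. *)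

From mathcomp Require Import all_boot all_order all_algebra.
Set Implicit Arguments. Unset Strict Implicit. Unset Printing Implicit Defensive.
Import Order.TTheory GRing.Theory Num.Theory.
Local Open Scope ring_scope.

(* A stochastic choice function on a finite set X: p x A is the probability
   of choosing x from the menu A (A ranges over nonempty subsets of X;
   values on the empty set are irrelevant). *)
Definition stochastic_choice (R : realFieldType) (X : finType)
  (p : X -> {set X} -> R) : Prop :=
  forall A : {set X}, A != set0 ->
    [/\ forall x, 0 <= p x A <= 1,
        \sum_(a in A) p a A = 1 &
        forall x, x \notin A -> p x A = 0].

Definition positive_choice (R : realFieldType) (X : finType)
  (p : X -> {set X} -> R) : Prop :=
  forall (A : {set X}) (a : X), a \in A -> 0 < p a A.

Definition sim_p (R : realFieldType) (X : finType)
  (p : X -> {set X} -> R) (a b : X) : Prop :=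
  forall A : {set X}, a \in A -> b \in A ->
    p a A / p b A = p a [set a; b] / p b [set a; b].

From mathcomp Require Import all_boot all_order all_algebra.
From mathcomp Require Import ring.
Set Implicit Arguments. Unset Strict Implicit. Unset Printing Implicit Defensive.
Import Order.TTheory GRing.Theory Num.Theory.
Local Open Scope ring_scope.

(* On any menu A containing a and c, the ratio
   p(a,A)/p(c,A) equals the product of the binary ratios for {a,b} and {b,c}:
   directly if b is in A, and after adding b to A if it is not, which the
   hypothesis allows because a ~ b and c ~ b. Since this value does not depend
   on A, in particular it is the binary ratio for {a,c}, whence a ~ c. *)

Definition pair_ratio (R : realFieldType) (X : finType)
  (p : X -> {set X} -> R) (a b : X) : R :=
  p a [set a; b] / p b [set a; b].

Lemma sim_p_sym (R : realFieldType) (X : finType) (p : X -> {set X} -> R)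
    (a b : X) :
  sim_p p a b -> sim_p p b a.
Proof.
move=> ab A bA aA; rewrite setUC -[LHS]invf_div (ab A aA bA).
by rewrite invf_div.
Qed.

Section Transitivity.

Variables (R : realFieldType) (X : finType) (p : X -> {set X} -> R).
Hypothesis p_pos : positive_choice p.
Variables a b c : X.
Hypotheses (sim_ab : sim_p p a b) (sim_bc : sim_p p b c).

Lemma ratio_chain (A : {set X}) :
  a \in A -> b \in A -> c \in A ->
  p a A / p c A = pair_ratio p a b * pair_ratio p b c.
Proof.
move=> aA bA cA; rewrite /pair_ratio -(sim_ab aA bA) -(sim_bc bA cA).
have pbA : p b A != 0 by rewrite gt_eqF ?p_pos.
have pcA : p c A != 0 by rewrite gt_eqF ?p_pos.
by field; rewrite pbA pcA.
Qed.

Hypothesis independence : forall (A : {set X}) (u v x : X),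
  A != set0 -> u \in A -> v \in A -> x \notin A ->
  sim_p p u x -> sim_p p v x ->
  p u A / p v A = p u (x |: A) / p v (x |: A).

Lemma ratio_chain_any (A : {set X}) :
  a \in A -> c \in A -> p a A / p c A = pair_ratio p a b * pair_ratio p b c.
Proof.
move=> aA cA; have [bA | bA] := boolP (b \in A); first exact: ratio_chain.
have A_neq0 : A != set0 by apply/set0Pn; exists a.
rewrite (independence A_neq0 aA cA bA sim_ab (sim_p_sym sim_bc)).
by apply: ratio_chain; rewrite !inE ?eqxx ?aA ?cA ?orbT.
Qed.

Lemma sim_p_trans : sim_p p a c.
Proof.
move=> A aA cA; rewrite !ratio_chain_any // !inE eqxx ?orbT //.
Qed.

End Transitivity.

Theorem mainTheorem2 (R : realFieldType) (X : finType)
  (p : X -> {set X} -> R) :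
  stochastic_choice p -> positive_choice p ->
  (forall (A : {set X}) (a b x : X),
     A != set0 -> a \in A -> b \in A -> x \notin A ->
     sim_p p a x -> sim_p p b x ->
     p a A / p b A = p a (x |: A) / p b (x |: A)) ->
  forall a b c : X, sim_p p a b -> sim_p p b c -> sim_p p a c.
Proof.
move=> _ p_pos independence a b c sim_ab sim_bc.
exact: (sim_p_trans p_pos sim_ab sim_bc independence).
Qed.
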